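(* Assume the standing setting and let $\epsilon>0$. If $|u^0_i-u^0_{i+1}|\le \epsilon/3^{M}$ for all $i\in\mathbb Z$, then for every coarse index $j$, $|v_0-u_0|\le\epsilon$, i.e. $|w^N_j-u^M_{jr}|\le\epsilon$.
   Context: Standing setting. Let $F:\mathbb R\to\mathbb R$ be continuously differentiable. For a spatial step $\eta>0$, a time step $\tau>0$ and an initial sequence $(z^0_i)_{i\in\mathbb Z}$ of reals, the EFC (Euler forward in time, centered in space) scheme produces $(z^n_i)_{i\in\mathbb Z,\,n\in\mathbb N}$ by $z^{n+1}_i=z^n_i-F'(z^n_i)\frac{\tau}{2\eta}\,(z^n_{i+1}-z^n_{i-1})$. It satisfies the CFL condition if $|F'(z^n_i)|\,\tau/\eta\le 1$ for all $i\in\mathbb Z$, $n\in\mathbb N$. Fix $a\in\mathbb R$, $h>0$, $\Delta t>0$, an integer $N>1$ and an even integer $r\ge 2$; put $k=h/r$, $dt=\Delta t/r$, $M=Nr$. Let $u_0:\mathbb R\to\mathbb R$. The coarse solution $(w^n_j)$ is the EFC scheme with $\eta=h$, $\tau=\Delta t$, $w^0_j=u_0(a+jh)$; the fine solution $(u^n_i)$ is the EFC scheme with $\eta=k$, $\tau=dt$, $u^0_i=u_0(a+ik)$ (so $w^0_j=u^0_{jr}$). Both are assumed to satisfy the CFL condition. Coarse nodes: $x_j=a+jh$. Interpolant: for a fixed coarse index $j$, set $p_1=x_j$, $p_2=x_{j+1}$, $d_1=w^N_j$, $d_2=w^N_{j+1}$, let $q$ be the cubic with $q(0)=p_1$, $q(1)=p_2$,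 $q'(0)=d_1$, $q'(1)=d_2$, and let $v(t)=q'(t)=(6p_1-6p_2+3d_1+3d_2)t^2+(-6p_1+6p_2-4d_1-2d_2)t+d_1$ for $t\in[0,1]$. For $0\le m\le r$ put $v_m=v(m/r)$ and $u_m=u^M_{jr+m}$ (the fine solution at time step $M$ at the fine node $x_j+mk$). (In this statement $u_0$ denotes $u^M_{jr}$, not the initial function.) *)

From Stdlib Require Import Reals ZArith Arith.
Open Scope R_scope.

(* EFC scheme (Euler forward in time, centred in space), driven by the
   derivative dF = F' of the flux:
   z^{n+1}_i = z^n_i - F'(z^n_i) * tau/(2 eta) * (z^n_{i+1} - z^n_{i-1}). *)
Fixpoint efc (dF : R -> R) (eta tau : R) (z0 : Z -> R) (n : nat) : Z -> R :=
  match n with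
  | O => z0
  | S n' => let z := efc dF eta tau z0 n' in
            fun i => z i - dF (z i) * (tau / (2 * eta)) * (z (i + 1)%Z - z (i - 1)%Z)
  end.

Definition CFL (dF : R -> R) (eta tau : R) (z0 : Z -> R) : Prop :=
  forall (n : nat) (i : Z), Rabs (dF (efc dF eta tau z0 n i)) * tau / eta <= 1.

(* v = q' for the cubic Hermite interpolant q. *)
Definition hermite_v (p1 p2 d1 d2 t : R) : R :=
  (6*p1 - 6*p2 + 3*d1 + 3*d2) * t^2 + (-6*p1 + 6*p2 - 4*d1 - 2*d2) * t + d1.

From Stdlib Require Import Reals ZArith Lra Lia Psatz.
Open Scope R_scope.

(* Under the CFL condition the centred update at node i is at most half of
   [|z_{i+1} - z_{i-1}|], hence at most the largest difference between
   neighbouring nodes.  Consequently one EFC step at most triples the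
   neighbour differences, and after n steps a node has drifted from its
   initial value by at most [(3^n - 1)/2] times the initial neighbour
   difference D.  The coarse and fine schemes start from the same value
   [u0 (x_j)] at the coarse node; the coarse neighbour differences are at
   most [r D], so the two drifts add up to at most
   [((3^N - 1) r + 3^(N r) - 1)/2 * D <= 3^(N r) D = eps], using
   [r 3^N <= 3^(N r)]. *)

Lemma Rabs_le_inv (x y : R) : Rabs x <= y -> - y <= x <= y.
Proof. unfold Rabs; destruct (Rcase_abs x); intros; lra. Qed.

Lemma efc_succ dF eta tau z0 n i :
  efc dF eta tau z0 (S n) i =
  efc dF eta tau z0 n i - dF (efc dF eta tau z0 n i) * (tau / (2 * eta)) *
    (efc dF eta tau z0 n (i + 1)%Z - efc dF eta tau z0 n (i - 1)%Z).
Proof. reflexivity. Qed.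

Section EFCStability.

Variables (dF : R -> R) (eta tau : R) (z0 : Z -> R).
Hypotheses (Heta : 0 < eta) (Htau : 0 < tau) (Hcfl : CFL dF eta tau z0).

Let z := efc dF eta tau z0.

Lemma efc_coef_le_half n i : Rabs (dF (z n i) * (tau / (2 * eta))) <= 1 / 2.
Proof.
  pose proof (Hcfl n i) as Hc; fold z in Hc.
  rewrite Rabs_mult, (Rabs_right (tau / (2 * eta)))
    by (apply Rle_ge, Rlt_le, Rdiv_lt_0_compat; lra).
  replace (Rabs (dF (z n i)) * (tau / (2 * eta)))
    with (Rabs (dF (z n i)) * tau / eta / 2) by (field; lra).
  lra.
Qed.

Lemma efc_correction_le n i d :
  (forall i, Rabs (z n i - z n (i + 1)%Z) <= d) ->
  Rabs (dF (z n i) * (tau / (2 * eta)) * (z n (i + 1)%Z - z n (i - 1)%Z)) <= d.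
Proof.
  intro Hd.
  pose proof (efc_coef_le_half n i) as Hc.
  pose proof (Rabs_le_inv _ _ (Hd i)) as Hright.
  pose proof (Rabs_le_inv _ _ (Hd (i - 1)%Z)) as Hleft.
  replace (i - 1 + 1)%Z with i in Hleft by lia.
  assert (Hspan : Rabs (z n (i + 1)%Z - z n (i - 1)%Z) <= 2 * d)
    by (apply Rabs_le; lra).
  rewrite Rabs_mult.
  pose proof (Rabs_pos (dF (z n i) * (tau / (2 * eta)))).
  pose proof (Rabs_pos (z n (i + 1)%Z - z n (i - 1)%Z)).
  nra.
Qed.

Lemma efc_neighbour_diff_le D :
  (forall i, Rabs (z0 i - z0 (i + 1)%Z) <= D) ->
  forall n i, Rabs (z n i - z n (i + 1)%Z) <= 3 ^ n * D.
Proof.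
  intros H0 n; induction n as [|n IHn]; intro i.
  - rewrite Rmult_1_l; exact (H0 i).
  - unfold z; rewrite !efc_succ; fold z.
    replace (i + 1 - 1)%Z with i by lia.
    pose proof (Rabs_le_inv _ _ (efc_correction_le n i _ IHn)) as Ci.
    pose proof (Rabs_le_inv _ _ (efc_correction_le n (i + 1) _ IHn)) as Ci1.
    replace (i + 1 - 1)%Z with i in Ci1 by lia.
    pose proof (Rabs_le_inv _ _ (IHn i)) as Hi.
    apply Rabs_le; simpl; lra.
Qed.

Lemma efc_drift_le D :
  (forall i, Rabs (z0 i - z0 (i + 1)%Z) <= D) ->
  forall n i, Rabs (z n i - z0 i) <= (3 ^ n - 1) / 2 * D.
Proof.
  intros H0 n; induction n as [|n IHn]; intro i.
  - simpl; rewrite Rminus_diag, Rabs_R0; lra.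
  - unfold z; rewrite efc_succ; fold z.
    pose proof (Rabs_le_inv _ _
      (efc_correction_le n i _ (efc_neighbour_diff_le D H0 n))) as Ci.
    pose proof (Rabs_le_inv _ _ (IHn i)) as Hi.
    apply Rabs_le; simpl; lra.
Qed.

End EFCStability.

Lemma Rabs_sub_shift_le (f : Z -> R) D :
  (forall i, Rabs (f i - f (i + 1)%Z) <= D) ->
  forall (m : nat) i, Rabs (f i - f (i + Z.of_nat m)%Z) <= INR m * D.
Proof.
  intros H m; induction m as [|m IHm]; intro i.
  - rewrite Z.add_0_r, Rminus_diag, Rabs_R0; simpl; lra.
  - replace (i + Z.of_nat (S m))%Z with (i + Z.of_nat m + 1)%Z by lia.
    pose proof (Rabs_le_inv _ _ (IHm i)) as Hm.
    pose proof (Rabs_le_inv _ _ (H (i + Z.of_nat m)%Z)) as Hstep.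
    rewrite S_INR; apply Rabs_le; lra.
Qed.

Lemma mul_pow3_le_pow3_mul (N r : nat) :
  (1 <= N)%nat -> (1 <= r)%nat -> INR r * 3 ^ N <= 3 ^ (N * r).
Proof.
  intros HN Hr; destruct r as [|s]; [lia |].
  replace (N * S s)%nat with (N + N * s)%nat by lia.
  rewrite pow_add, S_INR.
  assert (Hs : 3 ^ s <= 3 ^ (N * s)) by (apply Rle_pow; [lra | nia]).
  assert (Hbern : 1 + INR s * 2 <= (1 + 2) ^ s) by (apply poly; lra).
  replace (1 + 2) with 3 in Hbern by ring.
  pose proof (pos_INR s); pose proof (pow_le 3 N).
  nra.
Qed.

Lemma hermite_v_0 p1 p2 d1 d2 : hermite_v p1 p2 d1 d2 0 = d1.
Proof. unfold hermite_v; ring. Qed.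

Theorem proposition7
  (F dF : R -> R)
  (HF : forall x, derivable_pt_lim F x (dF x))
  (HdF : forall x, continuity_pt dF x)
  (a h Dt : R) (N r : nat) (u0 : R -> R) (eps : R)
  (Hh : 0 < h) (HDt : 0 < Dt) (HN : (1 < N)%nat)
  (Hr_even : Nat.Even r) (Hr2 : (2 <= r)%nat)
  (Hcoarse : CFL dF h Dt (fun j => u0 (a + IZR j * h)))
  (Hfine : CFL dF (h / INR r) (Dt / INR r) (fun i => u0 (a + IZR i * (h / INR r))))
  (Heps : 0 < eps)
  (Hinit : forall i : Z,
      Rabs (efc dF (h / INR r) (Dt / INR r) (fun i => u0 (a + IZR i * (h / INR r))) 0 i
          - efc dF (h / INR r) (Dt / INR r) (fun i => u0 (a + IZR i * (h / INR r))) 0 (i + 1)%Z)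
      <= eps / 3 ^ (N * r)) :
  forall j : Z,
    let w := efc dF h Dt (fun j => u0 (a + IZR j * h)) N in
    let uM := efc dF (h / INR r) (Dt / INR r)
                  (fun i => u0 (a + IZR i * (h / INR r))) (N * r) in
    let v := hermite_v (a + IZR j * h) (a + IZR (j + 1) * h) (w j) (w (j + 1)%Z) in
    Rabs (v 0 - uM (j * Z.of_nat r)%Z) <= eps /\
    Rabs (w j - uM (j * Z.of_nat r)%Z) <= eps.
Proof.
  intros j w uM v; unfold v; rewrite hermite_v_0.
  assert (Hr : 0 < INR r) by (apply lt_0_INR; lia).
  set (fine0 := fun i => u0 (a + IZR i * (h / INR r))) in *.
  set (coarse0 := fun j => u0 (a + IZR j * h)) in *.
  set (D := eps / 3 ^ (N * r)) in *.
  assert (Hpow : 0 < 3 ^ (N * r)) by (apply pow_lt; lra).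
  assert (HD : 0 < D) by (apply Rdiv_lt_0_compat; assumption).
  assert (Hcoarse_fine : forall j, coarse0 j = fine0 (j * Z.of_nat r)%Z).
  { intro j'; unfold coarse0, fine0; f_equal.
    rewrite mult_IZR, <- INR_IZR_INZ; field; lra. }
  assert (Hcoarse0 : forall j, Rabs (coarse0 j - coarse0 (j + 1)%Z) <= INR r * D).
  { intro j'; rewrite !Hcoarse_fine.
    replace ((j' + 1) * Z.of_nat r)%Z with (j' * Z.of_nat r + Z.of_nat r)%Z by lia.
    now apply Rabs_sub_shift_le. }
  pose proof (Rabs_le_inv _ _ (efc_drift_le _ _ _ _ Hh HDt Hcoarse _ Hcoarse0 N j)) as Dc.
  pose proof (Rabs_le_inv _ _ (efc_drift_le _ _ _ _
    (Rdiv_lt_0_compat _ _ Hh Hr) (Rdiv_lt_0_compat _ _ HDt Hr) Hfine _ Hinit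
    (N * r) (j * Z.of_nat r)%Z)) as Df.
  rewrite <- Hcoarse_fine in Df; fold w uM in Dc, Df.
  pose proof (mul_pow3_le_pow3_mul N r ltac:(lia) ltac:(lia)) as Hkey.
  assert (Heps_D : eps = 3 ^ (N * r) * D) by (unfold D; field; lra).
  assert (Hbound : Rabs (w j - uM (j * Z.of_nat r)%Z) <= eps) by (apply Rabs_le; nra).
  split; exact Hbound.
Qed.
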